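(* Let $P$ be a Fano polytope with scaffolding $S$ of shape $Z$, where $Z$ is simplicial, and let $Q=P^*$. For each maximal cone $\sigma_u$ of $\Sigma_Z$ (i.e. each $u\in V(S)$), the set $\iota(C_u)$ is a face of the polyhedron $Q_S$.
   Context: Notation: $N=\bar N\oplus N_U$, $M=\bar M\oplus M_U$; $P\subset N_{\mathbb{Q}}$ a Fano polytope (lattice polytope, origin in interior, primitive vertices); $Q=P^*=\{m\in M_{\mathbb{Q}}\mid\langle m,n\rangle\ge-1\ \forall n\in P\}$. $Z$ is a projective toric variety with fan $\Sigma_Z$ in $\bar M_{\mathbb{Q}}$, primitive ray generators $\rho_1,\dots,\rho_z$ spanning $\bar M$, divisors $\Delta_j$; $P_D=\{n\in\bar N_{\mathbb{Q}}\mid\langle\rho_j,n\rangle\ge-a_j\ \forall j\}$ for $D=\sum a_j\Delta_j$. A scaffolding $S$ of $P$ with shape $Z$ is a finite set of pairs $(D,\chi)$, $D$ nef torus-invariant on $Z$, $\chi\in N_U$, with $P=\operatorname{conv}\bigcup(P_D+\chi)$. $\widetilde N=\mathbb{Z}^z\oplus N_U$ with basis $\varepsilon_j$ of $\mathbb{Z}^z$, $\widetilde M$ dual with dual basis $\varepsilon_j^*$; $\rho_s=(-(a_j)_j,\chi)$ for $s=(D,\chi)$; $Q_S=\{w\in\widetilde M_{\mathbb{Q}}\mid\langle w,\varepsilon_j\rangle\ge0\ \forall j,\ \langle w,\rho_s\rangle\ge-1\ \forall s\in S\}$. $V(S)$ is the set of maximal cones $\sigma_u$ of $\Sigma_Z$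 (torus-fixed points of $Z$). $C_u:=Q\cap(\sigma_u\times M_{U,\mathbb{Q}})$. The piecewise linear map $\iota\colon M_{\mathbb{Q}}\to\widetilde M_{\mathbb{Q}}$ is defined by: if $m=(\bar m,m_U)$ with $\bar m\in\sigma_u$, write $\bar m=\sum_{\rho_j\in\sigma_u}c_j\rho_j$ (unique as $\sigma_u$ is simplicial) and set $\iota(m)=(\sum_{\rho_j\in\sigma_u}c_j\varepsilon_j^*,m_U)$; it is well defined and is a section of the projection $\widetilde M_{\mathbb{Q}}\to M_{\mathbb{Q}}$ dual to $\theta(\bar n,n_U)=((\langle\rho_j,\bar n\rangle)_j,n_U)$. *)

(* Rational vector spaces are modelled as row vectors 'rV[rat]_n;
   N_Q = Nbar_Q (+) N_U,Q is 'rV[rat]_(d+k) via row_mx, and similarly for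
   M_Q, Ntilde_Q = Q^z (+) N_U,Q and Mtilde_Q = 'rV[rat]_(z+k). *)
From HB Require Import structures.
From mathcomp Require Import all_boot all_order all_algebra.
Set Implicit Arguments. Unset Strict Implicit. Unset Printing Implicit Defensive.
Import Order.TTheory GRing.Theory Num.Theory.
Local Open Scope ring_scope.

Definition dot (n : nat) (u v : 'rV[rat]_n) : rat := \sum_(i < n) u ord0 i * v ord0 i.

Definition intv (n : nat) (v : 'rV[rat]_n) : Prop := forall i, denq (v ord0 i) = 1.

Definition primitive (n : nat) (v : 'rV[rat]_n) : Prop :=
  intv v /\ forall (c : nat) (w : 'rV[rat]_n), intv w -> v = c%:R *: w -> c = 1%N.

Definition conv (n : nat) (X : 'rV[rat]_n -> Prop) (x : 'rV[rat]_n) : Prop :=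
  exists (m : nat) (w : 'I_m -> rat) (p : 'I_m -> 'rV[rat]_n),
    (forall i, 0 <= w i) /\ \sum_i w i = 1 /\ (forall i, X (p i)) /\
    x = \sum_i w i *: p i.

Definition is_vertex (n : nat) (P : 'rV[rat]_n -> Prop) (v : 'rV[rat]_n) : Prop :=
  P v /\ forall (x y : 'rV[rat]_n) (t : rat), P x -> P y -> 0 < t -> t < 1 ->
    v = t *: x + (1 - t) *: y -> x = v /\ y = v.

Definition origin_interior (n : nat) (P : 'rV[rat]_n -> Prop) : Prop :=
  exists e : rat, 0 < e /\ forall x : 'rV[rat]_n, (forall i, `|x ord0 i| <= e) -> P x.

Definition fano_polytope (n : nat) (P : 'rV[rat]_n -> Prop) : Prop :=
  (exists V : seq 'rV[rat]_n, (forall v, v \in V -> intv v) /\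
     forall x, P x <-> conv (fun y => y \in V) x) /\
  origin_interior P /\
  (forall v, is_vertex P v -> primitive v).

Definition cone_of (d z : nat) (rho : 'I_z -> 'rV[rat]_d) (s : {set 'I_z})
  (x : 'rV[rat]_d) : Prop :=
  exists c : 'I_z -> rat, (forall j, 0 <= c j) /\ (forall j, j \notin s -> c j = 0) /\
    x = \sum_j c j *: rho j.

(* Sigma_Z: a complete fan in Mbar_Q with primitive ray generators rho_1..rho_z
   spanning the lattice Mbar, given by its list of maximal (full-dimensional) cones,
   each recorded by the set of indices of its rays. *)
Definition complete_fan (d z : nat) (rho : 'I_z -> 'rV[rat]_d)
  (cones : seq {set 'I_z}) : Prop :=
  injective rho /\
  (forall j, primitive (rho j)) /\
  (forall x, intv x -> exists c : 'I_z -> int, x = \sum_j (c j)%:~R *: rho j) /\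
  (forall j, exists2 s, s \in cones & j \in s) /\
      (forall s, s \in cones -> forall x : 'rV[rat]_d,
          exists c : 'I_z -> rat, (forall j, j \notin s -> c j = 0) /\
            x = \sum_j c j *: rho j) /\
      (forall s t, s \in cones -> t \in cones -> forall x,
          cone_of rho s x -> cone_of rho t x -> cone_of rho (s :&: t) x) /\
      (forall x, exists2 s, s \in cones & cone_of rho s x).

Definition simplicial_fan (d z : nat) (rho : 'I_z -> 'rV[rat]_d)
  (cones : seq {set 'I_z}) : Prop :=
  forall s, s \in cones -> forall c : 'I_z -> rat,
    (forall j, j \notin s -> c j = 0) -> \sum_j c j *: rho j = 0 -> forall j, c j = 0.

(* torus-invariant Cartier divisor sum_j a_j Delta_j on Z is nef: on each maximal cone
   its support function is given by a lattice point n_sigma of Nbar, and it is convex *)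
Definition nef (d z : nat) (rho : 'I_z -> 'rV[rat]_d) (cones : seq {set 'I_z})
  (a : 'rV[int]_z) : Prop :=
  forall s, s \in cones -> exists n : 'rV[rat]_d, intv n /\
    (forall j, j \in s -> dot (rho j) n = - (a ord0 j)%:~R) /\
    (forall j, - (a ord0 j)%:~R <= dot (rho j) n).

(* Z projective: there is an ample (strictly convex) torus-invariant divisor *)
Definition projective_fan (d z : nat) (rho : 'I_z -> 'rV[rat]_d)
  (cones : seq {set 'I_z}) : Prop :=
  exists a : 'rV[int]_z, forall s, s \in cones -> exists n : 'rV[rat]_d, intv n /\
    (forall j, j \in s -> dot (rho j) n = - (a ord0 j)%:~R) /\
    (forall j, j \notin s -> - (a ord0 j)%:~R < dot (rho j) n).

Definition P_D (d z : nat) (rho : 'I_z -> 'rV[rat]_d) (a : 'rV[int]_z)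
  (n : 'rV[rat]_d) : Prop :=
  forall j, - (a ord0 j)%:~R <= dot (rho j) n.

Definition scaffold_polytope (d k z : nat) (rho : 'I_z -> 'rV[rat]_d)
  (S : seq ('rV[int]_z * 'rV[rat]_k)) : 'rV[rat]_(d + k) -> Prop :=
  conv (fun x => exists2 s, s \in S & P_D rho s.1 (lsubmx x) /\ rsubmx x = s.2).

Definition scaffolding (d k z : nat) (rho : 'I_z -> 'rV[rat]_d)
  (cones : seq {set 'I_z}) (S : seq ('rV[int]_z * 'rV[rat]_k))
  (P : 'rV[rat]_(d + k) -> Prop) : Prop :=
  (forall s, s \in S -> nef rho cones s.1 /\ intv s.2) /\
  (forall x, P x <-> scaffold_polytope rho S x).

Definition dual_polytope (n : nat) (P : 'rV[rat]_n -> Prop) (m : 'rV[rat]_n) : Prop :=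
  forall x, P x -> -1 <= dot m x.

Definition rho_s (z k : nat) (s : 'rV[int]_z * 'rV[rat]_k) : 'rV[rat]_(z + k) :=
  row_mx (- map_mx (fun x : int => x%:~R) s.1) s.2.

Definition eps (z k : nat) (j : 'I_z) : 'rV[rat]_(z + k) :=
  row_mx (delta_mx ord0 j) 0.

Definition Q_S (z k : nat) (S : seq ('rV[int]_z * 'rV[rat]_k)) (w : 'rV[rat]_(z + k))
  : Prop :=
  (forall j, 0 <= dot w (eps k j)) /\ (forall s, s \in S -> -1 <= dot w (rho_s s)).

Definition C_u (d k z : nat) (rho : 'I_z -> 'rV[rat]_d) (Q : 'rV[rat]_(d + k) -> Prop)
  (u : {set 'I_z}) (m : 'rV[rat]_(d + k)) : Prop :=
  Q m /\ cone_of rho u (lsubmx m).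

Definition iota_on_cone (d k z : nat) (rho : 'I_z -> 'rV[rat]_d) (u : {set 'I_z})
  (m : 'rV[rat]_(d + k)) (w : 'rV[rat]_(z + k)) : Prop :=
  exists c : 'I_z -> rat, (forall j, j \notin u -> c j = 0) /\
    lsubmx m = \sum_j c j *: rho j /\
    w = row_mx (\sum_j c j *: delta_mx ord0 j) (rsubmx m).

(* image of a set under iota (computed on the cone sigma_u containing it) *)
Definition iota_image (d k z : nat) (rho : 'I_z -> 'rV[rat]_d) (u : {set 'I_z})
  (X : 'rV[rat]_(d + k) -> Prop) (w : 'rV[rat]_(z + k)) : Prop :=
  exists2 m, X m & iota_on_cone rho u m w.

(* F is a face of the polyhedron K: intersection of K with a supporting hyperplane
   (v = 0, c = 0 gives K itself; the empty face is allowed) *)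
Definition is_face (n : nat) (K F : 'rV[rat]_n -> Prop) : Prop :=
  exists (v : 'rV[rat]_n) (c : rat),
    (forall w, K w -> c <= dot w v) /\ (forall w, F w <-> (K w /\ dot w v = c)).

From HB Require Import structures.
From mathcomp Require Import all_boot all_order all_algebra.
Set Implicit Arguments. Unset Strict Implicit. Unset Printing Implicit Defensive.
Import Order.TTheory GRing.Theory Num.Theory.
Local Open Scope ring_scope.

(* The face is cut out by the functional w |-> sum_(j notin u) w_j, which is
   nonnegative on Q_S since <w, eps_j> >= 0.  On its zero set, iota is inverted
   by the projection theta^* dual to theta, and <theta^* w, x> = <w, theta x>.
   For x = (n, chi) with n in P_D, theta x dominates rho_s on the eps-part,
   with equality on sigma_u when n is the vertex of P_D attached to sigma_u
   (it exists since D is nef).  So the inequalities of Q = P^* on the generators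
   of P become those of Q_S on the face; simpliciality makes the coefficients
   of a point of sigma_u unique, which puts iota(C_u) inside the face. *)

Lemma dot_row_mx m n (a c : 'rV[rat]_m) (b e : 'rV[rat]_n) :
  dot (row_mx a b) (row_mx c e) = dot a c + dot b e.
Proof.
rewrite /dot big_split_ord /=; congr (_ + _); apply: eq_bigr => i _;
  by rewrite ?row_mxEl ?row_mxEr.
Qed.

Lemma dot_hsubmx m n (x y : 'rV[rat]_(m + n)) :
  dot x y = dot (lsubmx x) (lsubmx y) + dot (rsubmx x) (rsubmx y).
Proof. by rewrite -{1}(hsubmxK x) -{1}(hsubmxK y) dot_row_mx. Qed.

Lemma dotC n (x y : 'rV[rat]_n) : dot x y = dot y x.
Proof. by apply: eq_bigr => i _; rewrite mulrC. Qed.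

Lemma dot0r n (x : 'rV[rat]_n) : dot x 0 = 0.
Proof. by rewrite /dot big1 // => i _; rewrite mxE mulr0. Qed.

Lemma dot_suml n I (r : seq I) (c : I -> rat) (p : I -> 'rV[rat]_n) y :
  dot (\sum_(i <- r) c i *: p i) y = \sum_(i <- r) c i * dot (p i) y.
Proof.
rewrite /dot; under eq_bigr => l _ do rewrite summxE big_distrl /=.
rewrite exchange_big; apply: eq_bigr => i _.
by rewrite big_distrr; apply: eq_bigr => l _; rewrite mxE -mulrA.
Qed.

Lemma dot_rowl n (c : 'I_n -> rat) y : dot (\row_j c j) y = \sum_j c j * y ord0 j.
Proof. by apply: eq_bigr => j _; rewrite mxE. Qed.

Lemma dotr_delta n (x : 'rV[rat]_n) j : dot x (delta_mx ord0 j) = x ord0 j.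
Proof.
rewrite /dot (bigD1 j) //= big1 => [|i ij]; rewrite mxE ?eqxx.
  by rewrite mulr1 addr0.
by rewrite (negbTE ij) andbF mulr0.
Qed.

Lemma sum_delta_row n (c : 'I_n -> rat) :
  \sum_j c j *: delta_mx ord0 j = \row_j c j.
Proof.
apply/rowP => j; rewrite summxE (bigD1 j) //= big1 => [|i ij]; rewrite !mxE ?eqxx.
  by rewrite mulr1 addr0.
by rewrite eq_sym (negbTE ij) mulr0.
Qed.

Lemma dot_eps z k (w : 'rV[rat]_(z + k)) j : dot w (eps k j) = lsubmx w ord0 j.
Proof. by rewrite dot_hsubmx /eps row_mxKl row_mxKr dot0r addr0 dotr_delta. Qed.

Lemma dot_rho_s z k (w : 'rV[rat]_(z + k)) (s : 'rV[int]_z * 'rV[rat]_k) :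
  dot w (rho_s s) = \sum_j lsubmx w ord0 j * - (s.1 ord0 j)%:~R + dot (rsubmx w) s.2.
Proof.
rewrite dot_hsubmx /rho_s row_mxKl row_mxKr; congr (_ + _).
by apply: eq_bigr => j _; rewrite !mxE.
Qed.

Lemma conv_mem n (X : 'rV[rat]_n -> Prop) x : X x -> conv X x.
Proof.
move=> Xx; exists 1%N, (fun=> 1), (fun=> x).
by do !split; rewrite ?big_ord1 ?scale1r.
Qed.

Lemma conv_halfspace n (X : 'rV[rat]_n -> Prop) (m : 'rV[rat]_n) (c : rat) :
  (forall x, X x -> c <= dot m x) -> forall x, conv X x -> c <= dot m x.
Proof.
move=> Xc _ [N [t [p [t_ge0 [t_sum [Xp ->]]]]]].
rewrite dotC dot_suml -[c]mul1r -t_sum big_distrl /=.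
by apply: ler_sum => i _; rewrite dotC ler_wpM2l ?Xc.
Qed.

Section Theta.

Variables (d k z : nat) (rho : 'I_z -> 'rV[rat]_d).

Definition theta (x : 'rV[rat]_(d + k)) : 'rV[rat]_(z + k) :=
  row_mx (\row_j dot (rho j) (lsubmx x)) (rsubmx x).

Definition theta_dual (w : 'rV[rat]_(z + k)) : 'rV[rat]_(d + k) :=
  row_mx (\sum_j lsubmx w ord0 j *: rho j) (rsubmx w).

Lemma dot_theta_dual w x : dot (theta_dual w) x = dot w (theta x).
Proof.
rewrite !dot_hsubmx /theta_dual /theta !row_mxKl !row_mxKr dot_suml.
rewrite [dot (lsubmx w) _]dotC dot_rowl; congr (_ + _).
by apply: eq_bigr => j _; rewrite mulrC.
Qed.

Lemma dot_theta_subr_rho_s w x (s : 'rV[int]_z * 'rV[rat]_k) : rsubmx x = s.2 ->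
  dot w (theta x) - dot w (rho_s s) =
  \sum_j lsubmx w ord0 j * (dot (rho j) (lsubmx x) + (s.1 ord0 j)%:~R).
Proof.
move=> xU; rewrite dot_rho_s dot_hsubmx /theta row_mxKl row_mxKr xU.
rewrite dotC dot_rowl opprD addrACA subrr addr0 -sumrB; apply: eq_bigr => j _.
by rewrite mulrN opprK mulrDr mulrC.
Qed.

Lemma dot_rho_s_le_theta w x (s : 'rV[int]_z * 'rV[rat]_k) :
  (forall j, 0 <= lsubmx w ord0 j) -> P_D rho s.1 (lsubmx x) -> rsubmx x = s.2 ->
  dot w (rho_s s) <= dot w (theta x).
Proof.
move=> w_ge0 x_PD xU; rewrite -subr_ge0 dot_theta_subr_rho_s //.
by apply: sumr_ge0 => j _; rewrite mulr_ge0 // -lerBlDr sub0r.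
Qed.

Lemma dot_rho_s_eq_theta (u : {set 'I_z}) w x (s : 'rV[int]_z * 'rV[rat]_k) :
  (forall j, j \notin u -> lsubmx w ord0 j = 0) ->
  (forall j, j \in u -> dot (rho j) (lsubmx x) = - (s.1 ord0 j)%:~R) ->
  rsubmx x = s.2 -> dot w (rho_s s) = dot w (theta x).
Proof.
move=> w_supp x_tight xU; apply/eqP; rewrite eq_sym -subr_eq0.
rewrite dot_theta_subr_rho_s // big1 // => j _.
by case: (boolP (j \in u)) => [/x_tight ->|/w_supp ->]; rewrite ?addNr ?mulr0 ?mul0r.
Qed.

Lemma iota_on_coneP (u : {set 'I_z}) m w :
  iota_on_cone rho u m w <->
  (forall j, j \notin u -> lsubmx w ord0 j = 0) /\ m = theta_dual w.
Proof.
split=> [[c [c_supp [mbar ->]]] | [w_supp ->]].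
  rewrite row_mxKl sum_delta_row; split=> [j /c_supp|]; first by rewrite mxE.
  rewrite /theta_dual row_mxKl row_mxKr; under eq_bigr do rewrite mxE.
  by rewrite -mbar hsubmxK.
exists (fun j => lsubmx w ord0 j); split=> //; split; first by rewrite row_mxKl.
rewrite sum_delta_row row_mxKr -[LHS]hsubmxK; congr row_mx.
by apply/rowP => j; rewrite mxE.
Qed.

End Theta.

Lemma simplicial_coef_unique d z (rho : 'I_z -> 'rV[rat]_d) cones u
    (c c' : 'I_z -> rat) :
  simplicial_fan rho cones -> u \in cones ->
  (forall j, j \notin u -> c j = 0) -> (forall j, j \notin u -> c' j = 0) ->
  \sum_j c j *: rho j = \sum_j c' j *: rho j -> forall j, c j = c' j.
Proof.
move=> simp Hu c_supp c'_supp Ecc' j; apply/eqP; rewrite -subr_eq0; apply/eqP.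
apply: (simp u Hu (fun j => c j - c' j)) => [i iu|].
  by rewrite c_supp // c'_supp // subr0.
under eq_bigr => i _ do rewrite scalerBl.
by rewrite sumrB Ecc' subrr.
Qed.

Section Scaffolding.

Variables (d k z : nat) (rho : 'I_z -> 'rV[rat]_d) (cones : seq {set 'I_z}).
Variables (S : seq ('rV[int]_z * 'rV[rat]_k)) (P : 'rV[rat]_(d + k) -> Prop).
Hypothesis scaffS : scaffolding rho cones S P.

Lemma scaffolding_mem s n : s \in S -> P_D rho s.1 n -> P (row_mx n s.2).
Proof.
move=> Hs n_PD; apply/scaffS.2/conv_mem; exists s => //.
by rewrite row_mxKl row_mxKr.
Qed.

Lemma scaffolding_dual m :
  (forall s x, s \in S -> P_D rho s.1 (lsubmx x) -> rsubmx x = s.2 -> -1 <= dot m x) ->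
  dual_polytope P m.
Proof.
move=> gen_ge x /scaffS.2; apply: conv_halfspace => y [s Hs [y_PD yU]].
exact: gen_ge y_PD yU.
Qed.

Definition cone_functional (u : {set 'I_z}) : 'rV[rat]_(z + k) :=
  row_mx (\row_j (j \notin u)%:R) 0.

Lemma dot_cone_functional (u : {set 'I_z}) w :
  dot w (cone_functional u) = \sum_(j | j \notin u) lsubmx w ord0 j.
Proof.
rewrite dot_hsubmx /cone_functional row_mxKl row_mxKr dot0r addr0.
rewrite dotC dot_rowl [RHS]big_mkcond /=; apply: eq_bigr => j _.
by case: (j \notin u); rewrite ?mul1r ?mul0r.
Qed.

Lemma Q_S_lsubmx_ge0 w : Q_S S w -> forall j, 0 <= lsubmx w ord0 j.
Proof. by move=> [w_eps _] j; rewrite -dot_eps. Qed.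

Lemma Q_S_cone_functional_ge0 (u : {set 'I_z}) w :
  Q_S S w -> 0 <= dot w (cone_functional u).
Proof.
by move=> /Q_S_lsubmx_ge0 w_ge0; rewrite dot_cone_functional sumr_ge0.
Qed.

Lemma Q_S_cone_functional_eq0 (u : {set 'I_z}) w :
  Q_S S w -> dot w (cone_functional u) = 0 ->
  forall j, j \notin u -> lsubmx w ord0 j = 0.
Proof.
move=> /Q_S_lsubmx_ge0 w_ge0; rewrite dot_cone_functional.
by apply: psumr_eq0P => j _.
Qed.

Lemma iota_C_u_sub_Q_S (u : {set 'I_z}) w :
  simplicial_fan rho cones -> u \in cones ->
  iota_image rho u (C_u rho (dual_polytope P) u) w ->
  Q_S S w /\ forall j, j \notin u -> lsubmx w ord0 j = 0.
Proof.
move=> simp Hu [m [Qm [c [c_ge0 [c_supp mbar]]]] /iota_on_coneP [w_supp Em]].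
have w_ge0 j : 0 <= lsubmx w ord0 j.
  rewrite (simplicial_coef_unique simp Hu w_supp c_supp) //.
  by rewrite -mbar Em /theta_dual row_mxKl.
split=> //; split=> [j|s Hs]; first by rewrite dot_eps.
have [/(_ u Hu) [n [_ [n_tight n_PD]]] _] := scaffS.1 s Hs.
rewrite (@dot_rho_s_eq_theta _ _ _ rho u w (row_mx n s.2)) ?row_mxKl ?row_mxKr //.
by rewrite -dot_theta_dual -Em; apply: Qm; apply: scaffolding_mem.
Qed.

Lemma Q_S_sub_iota_C_u (u : {set 'I_z}) w :
  Q_S S w -> (forall j, j \notin u -> lsubmx w ord0 j = 0) ->
  iota_image rho u (C_u rho (dual_polytope P) u) w.
Proof.
move=> QSw w_supp; have w_ge0 := Q_S_lsubmx_ge0 QSw.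
exists (theta_dual rho w); last exact/iota_on_coneP.
split.
  apply: scaffolding_dual => s x Hs x_PD xU; rewrite dot_theta_dual.
  exact: le_trans (QSw.2 s Hs) (dot_rho_s_le_theta w_ge0 x_PD xU).
by exists (fun j => lsubmx w ord0 j); rewrite /theta_dual row_mxKl.
Qed.

End Scaffolding.

Theorem propositionA8 (d k z : nat) (rho : 'I_z -> 'rV[rat]_d)
  (cones : seq {set 'I_z}) (S : seq ('rV[int]_z * 'rV[rat]_k))
  (P : 'rV[rat]_(d + k) -> Prop) :
  complete_fan rho cones ->
  projective_fan rho cones ->
  simplicial_fan rho cones ->
  fano_polytope P ->
  scaffolding rho cones S P ->
  forall u : {set 'I_z}, u \in cones ->
    is_face (Q_S S) (iota_image rho u (C_u rho (dual_polytope P) u)).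
Proof.
move=> _ _ simp _ scaffS u Hu.
exists (cone_functional k u), 0; split=> [w|w]; first exact: Q_S_cone_functional_ge0.
split=> [/(iota_C_u_sub_Q_S scaffS simp Hu) [QSw w_supp] | [QSw w_face]].
  by split=> //; rewrite dot_cone_functional big1.
exact: (Q_S_sub_iota_C_u scaffS) (Q_S_cone_functional_eq0 QSw w_face).
Qed.
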